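(* Let $p$ be a prime, $0<\alpha\le1$, and let $S\subseteq\mathbb{Z}_p$ have the property that all pairwise sums of different elements of $S$ are distinct (i.e., if $s_1,s_2,s_3,s_4\in S$ with $s_1\neq s_2$, $s_3\neq s_4$ and $s_1+s_2=s_3+s_4$ in $\mathbb{Z}_p$, then $\{s_1,s_2\}=\{s_3,s_4\}$). Then $$\mathcal{C}^{\mathrm{bsgs1}}_\alpha(S)>(\alpha|S|/\sqrt2)^{2/3}.$$
   Context: The BSGS-1 $\alpha$-complexity $\mathcal{C}^{\mathrm{bsgs1}}_\alpha(S)$ of $S\subseteq\mathbb{Z}_p$ is the smallest integer $n$ such that there exist $X,Y\subseteq\mathbb{Z}_p$ with $|X|=|Y|=n$ and $|S\cap(X-Y)|\geq\alpha|S|$, where $X-Y=\{x-y\mid x\in X,y\in Y\}$ (computed in $\mathbb{Z}_p$). *)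

From Stdlib Require Import Reals.
From mathcomp Require Import all_boot all_order all_algebra.
Set Implicit Arguments. Unset Strict Implicit. Unset Printing Implicit Defensive.
Import GRing.Theory.

Definition diffset (p : nat) (X Y : {set 'F_p}) : {set 'F_p} :=
  [set (x - y)%R | x in X, y in Y].

Definition bsgs1_ok (p : nat) (alpha : R) (S : {set 'F_p}) (n : nat) : bool :=
  [exists X : {set 'F_p}, exists Y : {set 'F_p},
     [&& #|X| == n, #|Y| == n &
        (if Rle_dec (Rmult alpha (INR #|S|)) (INR #|S :&: diffset X Y|)
         then true else false)]].

Lemma bsgs1_ex (p : nat) (alpha : R) (S : {set 'F_p}) :
  exists n, bsgs1_ok alpha S n || (n > #|'F_p|)%N.
Proof. exists (#|'F_p|.+1); by rewrite ltnSn orbT. Qed.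

(* The
   disjunct (n > #|'F_p|) only makes the minimum total; for 0 < alpha <= 1
   the condition holds at n = #|'F_p| (X = Y = whole group), so it never
   affects the value. *)
Definition C_bsgs1 (p : nat) (alpha : R) (S : {set 'F_p}) : nat :=
  ex_minn (bsgs1_ex alpha S).

Definition distinct_pair_sums (p : nat) (S : {set 'F_p}) : Prop :=
  forall s1 s2 s3 s4, s1 \in S -> s2 \in S -> s3 \in S -> s4 \in S ->
    s1 != s2 -> s3 != s4 -> (s1 + s2 = s3 + s4)%R ->
    [set s1; s2] = [set s3; s4].

From Stdlib Require Import Reals Lra.
From mathcomp Require Import all_boot all_order all_algebra.
From mathcomp Require Import zify.
Set Implicit Arguments. Unset Strict Implicit. Unset Printing Implicit Defensive.
Import GRing.Theory.

(* Let T = S :&: (X - Y) and choose one representation s = x - y for each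
   s in T.  The chosen pairs form a set P of |T| points of X x Y containing no
   rectangle {x1, x2} x {y1, y2}: (x1 - y1) + (x2 - y2) = (x1 - y2) + (x2 - y1)
   would be two different ways of writing one element as a sum of two distinct
   elements of S.  Counting the pairs of points of P lying in a common column
   (as in Kovari-Sos-Turan) and applying Cauchy-Schwarz gives
   |T|^2 <= |Y| (|T| + |X|^2 - |X|), hence |T|^2 < 2 n^3 when |X| = |Y| = n,
   and |T| >= alpha |S| yields n > (alpha |S| / sqrt 2)^(2/3). *)

Lemma card_pairs_by_snd (T U : finType) (P : {set T * U}) :
  #|P| = \sum_y #|[set x | (x, y) \in P]|.
Proof.
under eq_bigr do rewrite -sum1dep_card big_mkcond.
rewrite exchange_big pair_bigA /= -sum1_card big_mkcond /=.
by apply: eq_bigr => -[x y].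
Qed.

Definition offdiag (T : finType) (A : {set T}) : {set T * T} :=
  [set v in setX A A | v.1 != v.2].

Lemma card_offdiag (T : finType) (A : {set T}) : #|offdiag A| = #|A| ^ 2 - #|A|.
Proof.
have diagE : setX A A :&: [set v | v.1 == v.2] = (fun x => (x, x)) @: A.
  apply/setP => -[x y]; rewrite !inE /=.
  apply/andP/imsetP => [[/andP[xA _] /eqP <-]|[z zA [-> ->]]]; first by exists x.
  by rewrite zA eqxx.
have offE : offdiag A = setX A A :\: [set v | v.1 == v.2].
  by apply/setP => v; rewrite !inE andbC.
rewrite -mulnn -cardsX -(cardsID [set v | v.1 == v.2] (setX A A)) diagE.
by rewrite card_imset ?offE ?addKn // => x y [].
Qed.

Lemma sqr_sum_leq_card_sum_sqr (T : finType) (A : {pred T}) (f : T -> nat) :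
  (\sum_(i in A) f i) ^ 2 <= #|A| * \sum_(i in A) f i ^ 2.
Proof.
rewrite -(leq_pmul2l (isT : 0 < 2)) expnS expn1 big_distrl big_distrr /=.
set s := \sum_(i in A) f i ^ 2.
have -> : 2 * (#|A| * s) = \sum_(i in A) \sum_(j in A) (f i ^ 2 + f j ^ 2).
  transitivity (\sum_(i in A) (#|A| * f i ^ 2 + s)).
    by rewrite big_split /= sum_nat_const -big_distrr /=; lia.
  by apply: eq_bigr => i _; rewrite big_split /= sum_nat_const.
apply: leq_sum => i _; rewrite mulnA big_distrr /=; apply: leq_sum => j _.
by rewrite -mulnA; apply: nat_Cauchy.
Qed.

Definition rectangle_free (T U : finType) (P : {set T * U}) :=
  forall x1 x2 y1 y2, (x1, y1) \in P -> (x1, y2) \in P -> (x2, y1) \in P ->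
    (x2, y2) \in P -> x1 = x2 \/ y1 = y2.

Section RectangleFree.

Variables (T U : finType) (X : {set T}) (Y : {set U}) (P : {set T * U}).
Hypotheses (sPXY : P \subset setX X Y) (rectP : rectangle_free P).

Let col y := [set x | (x, y) \in P].

Lemma sum_col_sqr_leq : \sum_y #|col y| ^ 2 <= #|P| + (#|X| ^ 2 - #|X|).
Proof.
(* Q is the set of "cherries" ((x1, x2), y) with x1 != x2 in a common column y;
   rectangle-freeness makes the projection to (x1, x2) injective. *)
pose Q := [set w : T * T * U | w.1 \in offdiag (col w.2)].
have cardQ : #|Q| = \sum_y (#|col y| ^ 2 - #|col y|).
  rewrite card_pairs_by_snd; apply: eq_bigr => y _.
  by rewrite -card_offdiag; apply: eq_card => v; rewrite !inE.
have leQ : #|Q| <= #|X| ^ 2 - #|X|.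
  rewrite -card_offdiag -(@card_in_imset _ _ fst Q).
    apply/subset_leq_card/subsetP => _ /imsetP[[[x1 x2] y] + ->].
    rewrite /offdiag !inE /= => /andP[/andP[P1 P2] ne]; rewrite ne andbT.
    by have /setXP[-> _] := subsetP sPXY _ P1; have /setXP[-> _] := subsetP sPXY _ P2.
  move=> [[x1 x2] y] [[x1' x2'] y']; rewrite /offdiag !inE /= => /andP[/andP[P1 P2] ne].
  move=> + [e1 e2]; rewrite -e1 -e2 => /andP[/andP[P1' P2'] _].
  by have [/eqP|->] := rectP P1 P1' P2 P2'; first rewrite (negbTE ne).
have -> : \sum_y #|col y| ^ 2 = #|Q| + #|P|.
  rewrite cardQ card_pairs_by_snd -big_split /=.
  by apply: eq_bigr => y _; rewrite subnK //; nia.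
by rewrite addnC leq_add2l.
Qed.

Lemma rectangle_free_card_sqr_leq : #|P| ^ 2 <= #|Y| * (#|P| + (#|X| ^ 2 - #|X|)).
Proof.
have colY y : y \notin Y -> col y = set0.
  move=> yY; apply/setP => x; rewrite !inE; apply: contraNF yY => Pxy.
  by have /setXP[] := subsetP sPXY _ Pxy.
have cardP : #|P| = \sum_(y in Y) #|col y|.
  rewrite card_pairs_by_snd (bigID (mem Y)) /= [X in _ + X]big1 ?addn0 // => y yY.
  by rewrite -/(col y) colY ?cards0.
rewrite [in X in X ^ 2]cardP; apply: leq_trans (sqr_sum_leq_card_sum_sqr _ _) _.
rewrite leq_mul2l; apply/orP; right; apply: leq_trans sum_col_sqr_leq.
by rewrite [X in _ <= X](bigID (mem Y)) leq_addr.
Qed.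

End RectangleFree.

Lemma injective_subset_imset (aT rT : finType) (f : aT -> rT) (A : {set aT}) :
  exists B : {set aT}, [/\ B \subset A, {in B &, injective f} & f @: B = f @: A].
Proof.
(* B keeps the elements that are the chosen representative of their own fibre. *)
pose rep a := [pick b in A | f b == f a].
have repP a : a \in A -> exists2 b, rep a = Some b & (b \in A) && (f b == f a).
  move=> aA; rewrite /rep; case: pickP => [b bP|/(_ a)]; first by exists b.
  by rewrite aA eqxx.
have sBA : [set a in A | rep a == Some a] \subset A.
  by apply/subsetP => a; rewrite inE => /andP[].
exists [set a in A | rep a == Some a]; split=> //.
  move=> a b; rewrite !inE => /andP[_ /eqP ra] /andP[_ /eqP rb] fab.
  by move: ra; rewrite /rep fab -/(rep b) rb => -[].
apply/eqP; rewrite eqEsubset imsetS //=; apply/subsetP => _ /imsetP[a aA ->].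
have [b rb /andP[bA /eqP fb]] := repP a aA.
rewrite -fb imset_f // inE bA -rb; apply/eqP.
by rewrite /rep fb.
Qed.

Lemma sidon_rectangle_free (p : nat) (S : {set 'F_p}) (P : {set 'F_p * 'F_p}) :
  distinct_pair_sums S -> {in P, forall u, u.1 - u.2 \in S}%R ->
  {in P &, injective (fun u => u.1 - u.2)%R} -> rectangle_free P.
Proof.
move=> sidonS PS injP x1 x2 y1 y2 P11 P12 P21 P22.
have [->|nx] := eqVneq x1 x2; [by left | right].
have ne_diff a b c d : (a, b) \in P -> (c, d) \in P -> a != c -> (a - b != c - d)%R.
  by move=> Pab Pcd; apply: contra_neq => /(injP _ _ Pab Pcd) [].
have sum_eq : (x1 - y1 + (x2 - y2) = x1 - y2 + (x2 - y1))%R.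
  by rewrite addrACA [RHS]addrACA [(- y2 + _)%R]addrC.
have := sidonS _ _ _ _ (PS _ P11) (PS _ P22) (PS _ P12) (PS _ P21)
  (ne_diff _ _ _ _ P11 P22 nx) (ne_diff _ _ _ _ P12 P21 nx) sum_eq.
move=> /setP/(_ (x1 - y1)%R); rewrite !inE eqxx => /esym/orP[/eqP|/eqP].
  by move/addrI/oppr_inj.
by move/addIr/eqP; rewrite (negbTE nx).
Qed.

Lemma sidon_diffset_card_sqr_leq (p : nat) (S X Y : {set 'F_p}) :
  distinct_pair_sums S ->
  #|S :&: diffset X Y| ^ 2 <= #|Y| * (#|S :&: diffset X Y| + (#|X| ^ 2 - #|X|)).
Proof.
move=> sidonS.
pose A := [set u in setX X Y | (u.1 - u.2)%R \in S].
have [P [sPA injP imP]] := injective_subset_imset (fun u => u.1 - u.2)%R A.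
have imA : [set (u.1 - u.2)%R | u in A] = S :&: diffset X Y.
  apply/setP => s; rewrite /diffset curry_imset2X !inE.
  apply/imsetP/andP => [[[x y] + ->]|[sS /imsetP[[x y] xyXY eq_s]]].
    by rewrite inE => /andP[xyXY xyS]; split=> //; apply: (imset_f _ xyXY).
  by exists (x, y); rewrite // inE xyXY; rewrite eq_s in sS.
have cardP : #|P| = #|S :&: diffset X Y| by rewrite -imA -imP card_in_imset.
have PA u : u \in P -> (u \in setX X Y) && (u.1 - u.2 \in S)%R.
  by move/(subsetP sPA); rewrite inE.
rewrite -cardP; apply: rectangle_free_card_sqr_leq.
  by apply/subsetP => u /PA /andP[].
by apply: sidon_rectangle_free sidonS _ injP => u /PA /andP[].
Qed.

(* If t ^ 2 >= 2 n ^ 3, the hypothesis forces t >= n ^ 2 + n, which is too large. *)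
Lemma sqr_lt_twice_cube (t n : nat) :
  0 < t -> t ^ 2 <= n * (t + (n ^ 2 - n)) -> t ^ 2 < 2 * n ^ 3.
Proof. nia. Qed.

Local Open Scope R_scope.

Lemma Rpower_two_thirds_lt (a : R) (t n : nat) :
  0 < a -> a <= INR t -> (t ^ 2 < 2 * n ^ 3)%N -> Rpower (a / sqrt 2) (2 / 3) < INR n.
Proof.
move=> a_gt0 le_at /ltP/lt_INR lt_tn.
change (INR (t * t) < INR (2 * (n * (n * n)))) in lt_tn.
rewrite !mult_INR in lt_tn.
have sqrt2_gt0 : 0 < sqrt 2 by apply: sqrt_lt_R0; lra.
have b_gt0 : 0 < a / sqrt 2 by apply: Rdiv_lt_0_compat.
set b := a / sqrt 2 in b_gt0 *.
have b_sqr : b ^ 2 < INR n ^ 3.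
  have sqr_b : b ^ 2 * 2 = a ^ 2.
    have e : a / sqrt 2 * (a / sqrt 2) * (sqrt 2 * sqrt 2) = a * a by field; lra.
    by rewrite sqrt_sqrt in e; [rewrite /b /= !Rmult_1_r | lra].
  have : a ^ 2 <= INR t ^ 2 by apply: pow_incr; lra.
  simpl in *; lra.
have cube : Rpower b (2 / 3) ^ 3 = b ^ 2.
  rewrite -(Rpower_pow 3) ?Rpower_mult -?(Rpower_pow 2 _ b_gt0); last exact: exp_pos.
  by congr Rpower; simpl; lra.
have [//|le_nb] := Rlt_or_le (Rpower b (2 / 3)) (INR n).
have : INR n ^ 3 <= Rpower b (2 / 3) ^ 3 by apply: pow_incr; split=> //; apply: pos_INR.
lra.
Qed.

Theorem theorem6 (p : nat) (alpha : R) (S : {set 'F_p}) :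
  prime p -> (0 < #|S|)%N -> Rlt 0 alpha -> Rle alpha 1 -> distinct_pair_sums S ->
  Rlt (Rpower (Rdiv (Rmult alpha (INR #|S|)) (sqrt 2)) (Rdiv 2 3))
      (INR (C_bsgs1 alpha S)).
Proof.
move=> _ S_gt0 alpha_gt0 alpha_le1 sidonS.
have aS_gt0 : 0 < alpha * INR #|S|.
  by apply: Rmult_lt_0_compat => //; apply/lt_0_INR/ltP.
rewrite /C_bsgs1; case: ex_minnP => n ok_n _.
suff [t le_aS_t lt_t_n] : exists2 t : nat, alpha * INR #|S| <= INR t & (t ^ 2 < 2 * n ^ 3)%N.
  exact: Rpower_two_thirds_lt aS_gt0 le_aS_t lt_t_n.
case/orP: ok_n => [/existsP[X /existsP[Y /and3P[/eqP cardX /eqP cardY]]] | S_lt_n].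
  case: Rle_dec => // le_aS _; exists #|S :&: diffset X Y| => //.
  apply: sqr_lt_twice_cube; first by apply/ltP/INR_lt/(Rlt_le_trans _ _ _ aS_gt0).
  by have := sidon_diffset_card_sqr_leq X Y sidonS; rewrite cardX cardY.
exists #|S|; first by rewrite -[X in _ <= X]Rmult_1_l; apply: Rmult_le_compat_r; [apply: pos_INR | lra].
have := leq_ltn_trans (max_card S) S_lt_n; nia.
Qed.
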